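(* Let $F$ be a field, $R$ a Hopf $F$-algebra, and let $T=R[x;\sigma,\delta]$ be a Hopf $F$-algebra containing $R$ as a Hopf subalgebra, where $\sigma$ is an $F$-algebra automorphism of $R$ and $\delta$ a $\sigma$-derivation of $R$. Suppose that $R\otimes R$ is a domain. Then $$\Delta(x)=s(1\otimes x)+t(x\otimes 1)+v(x\otimes x)+w$$ for some $s,t,v,w\in R\otimes R$.
   Context: Hopf algebras have bijective antipode. $R[x;\sigma,\delta]$ is the skew polynomial algebra generated by $R$ and $x$ with $xr-\sigma(r)x=\delta(r)$ for $r\in R$, where $\delta(ab)=\delta(a)b+\sigma(a)\delta(b)$. *)

From HB Require Import structures.
From mathcomp Require Import all_boot all_order all_algebra.
Set Implicit Arguments. Unset Strict Implicit. Unset Printing Implicit Defensive.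
Import Order.TTheory GRing.Theory.
Local Open Scope ring_scope.

Section Defs.
Variable F : fieldType.

Definition bilinear_map (U V W : lmodType F) (f : U -> V -> W) : Prop :=
  (forall v, linear (fun u => f u v)) /\ (forall u, linear (f u)).

Definition is_tensor (U V X : lmodType F) (tp : U -> V -> X) : Prop :=
  bilinear_map tp /\
  forall (Y : lmodType F) (f : U -> V -> Y), bilinear_map f ->
    exists h : X -> Y, [/\ linear h, (forall u v, h (tp u v) = f u v) &
      forall h' : X -> Y, linear h' -> (forall u v, h' (tp u v) = f u v) ->
        forall z, h' z = h z].

Definition is_tensor_algebra (T TT : algType F) (tp : T -> T -> TT) : Prop :=
  [/\ is_tensor tp, tp 1 1 = 1 &
      forall a b c d, tp a b * tp c d = tp (a * c) (b * d)].

(** [TTT] is the triple tensor product, viewed both as [(T⊗T)⊗T] via [tpL]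
    and as [T⊗(T⊗T)] via [tpR], compatibly (associativity isomorphism). *)
Definition is_triple_tensor (T TT : algType F) (tp : T -> T -> TT)
    (TTT : lmodType F) (tpL : TT -> T -> TTT) (tpR : T -> TT -> TTT) : Prop :=
  [/\ is_tensor tpL, is_tensor tpR &
      forall a b c, tpL (tp a b) c = tpR a (tp b c)].

(** Hopf algebra structure (comultiplication [D], counit [eps], antipode [S])
    on [T], with bijective antipode (standing convention of the paper). *)
Definition hopf_algebra (T TT : algType F) (tp : T -> T -> TT)
    (TTT : lmodType F) (tpL : TT -> T -> TTT) (tpR : T -> TT -> TTT)
    (D : T -> TT) (eps : T -> F) (S : T -> T) : Prop :=
  [/\
      linear D /\ D 1 = 1 /\ (forall a b, D (a * b) = D a * D b),
      (forall k a b, eps (k *: a + b) = k * eps a + eps b) /\ eps 1 = 1 /\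
        (forall a b, eps (a * b) = eps a * eps b),
      (* coassociativity: (D ⊗ id) D = (id ⊗ D) D *)
      (forall h1 h2 : TT -> TTT, linear h1 -> linear h2 ->
        (forall a b, h1 (tp a b) = tpL (D a) b) ->
        (forall a b, h2 (tp a b) = tpR a (D b)) ->
        forall t, h1 (D t) = h2 (D t)),
      (* counit axioms: (eps ⊗ id) D = id = (id ⊗ eps) D *)
      (forall h1 h2 : TT -> T, linear h1 -> linear h2 ->
        (forall a b, h1 (tp a b) = eps a *: b) ->
        (forall a b, h2 (tp a b) = eps b *: a) ->
        forall t, h1 (D t) = t /\ h2 (D t) = t) &
      (* antipode: m (S ⊗ id) D = eta eps = m (id ⊗ S) D, S linear bijective *)
      [/\ linear S, bijective S &
        forall h1 h2 : TT -> T, linear h1 -> linear h2 ->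
        (forall a b, h1 (tp a b) = S a * b) ->
        (forall a b, h2 (tp a b) = a * S b) ->
        forall t, h1 (D t) = eps t *: 1 /\ h2 (D t) = eps t *: 1]].

(** Elements of the image of [R ⊗ R] inside [T ⊗ T], for [R ⊆ T]. *)
Definition in_tensor (T TT : algType F) (tp : T -> T -> TT) (R : {pred T})
    (z : TT) : Prop :=
  exists s : seq (T * T), all (fun p => (p.1 \in R) && (p.2 \in R)) s /\
    z = \sum_(p <- s) tp p.1 p.2.

(** [R] is a Hopf subalgebra of [T] (its own antipode being bijective). *)
Definition hopf_subalgebra (T TT : algType F) (tp : T -> T -> TT)
    (D : T -> TT) (S : T -> T) (R : {pred T}) : Prop :=
  [/\ subalg_closed R,
      {in R, forall a, in_tensor tp R (D a)},
      {in R, forall a, S a \in R} &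
      {in R, forall b, exists2 a, a \in R & S a = b}].

(** [sg] is an F-algebra automorphism of [R] and [dl] an F-linear
    [sg]-derivation of [R] (both given as maps on the ambient [T]). *)
Definition alg_automorphism_on (T : algType F) (R : {pred T}) (sg : T -> T) :=
  [/\ {in R, forall a, sg a \in R},
      {in R &, injective sg},
      {in R, forall b, exists2 a, a \in R & sg a = b},
      forall k, {in R &, forall a b, sg (k *: a + b) = k *: sg a + sg b} &
      sg 1 = 1 /\ {in R &, forall a b, sg (a * b) = sg a * sg b}].

Definition sigma_derivation_on (T : algType F) (R : {pred T})
    (sg dl : T -> T) :=
  [/\ {in R, forall a, dl a \in R},
      forall k, {in R &, forall a b, dl (k *: a + b) = k *: dl a + dl b} &
      {in R &, forall a b, dl (a * b) = dl a * b + sg a * dl b}].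

Definition is_skew_poly (T : algType F) (R : {pred T}) (sg dl : T -> T)
    (x : T) : Prop :=
  [/\ {in R, forall r, x * r - sg r * x = dl r},
      (forall t, exists n (c : 'I_n -> T),
          (forall i, c i \in R) /\ t = \sum_(i < n) c i * x ^+ i) &
      (forall n (c : 'I_n -> T), (forall i, c i \in R) ->
          \sum_(i < n) c i * x ^+ i = 0 -> forall i, c i = 0)].

Definition tensor_domain (T TT : algType F) (tp : T -> T -> TT)
    (R : {pred T}) : Prop :=
  forall a b, in_tensor tp R a -> in_tensor tp R b -> a * b = 0 ->
    a = 0 \/ b = 0.

End Defs.

(* Grade T ⊗ T by the powers of x in one tensor factor: it is free over the image of
   T ⊗ R (resp. R ⊗ T) on the 1 ⊗ x^j (resp. x^i ⊗ 1), and this image is again a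
   domain, because top coefficients multiply up to a twist by a power of σ and land
   in R ⊗ R.  Suppose Δx has degree N ≥ 2 in the second factor.  Coassociativity
   identifies the image of Δx under the canonical map u ⊗ v ↦ (u ⊗ 1) Δv with
   (m Δ ⊗ id)(Δx), of degree at most N.  But writing Δx = Σ c_j (1 ⊗ x^j), this
   image is Σ can(c_j) (Δx)^j, whose coefficient in degree N² is can(c_N) times the
   top coefficient of (Δx)^N, which is nonzero because the antipode makes the
   canonical map injective.  The first factor is handled in the same way with
   u ⊗ v ↦ Δu (1 ⊗ v), after moving the top coefficient of Δx to the right of
   x^N ⊗ 1. *)

From HB Require Import structures.
From mathcomp Require Import all_boot all_order all_algebra.
From Stdlib Require Import ClassicalEpsilon.
Set Implicit Arguments. Unset Strict Implicit. Unset Printing Implicit Defensive.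
Import GRing.Theory.
Local Open Scope ring_scope.

Section LinearFun.
Variables (F : fieldType) (U V : lmodType F) (f : U -> V).
Hypothesis f_lin : linear f.
HB.instance Definition _ := GRing.isLinear.Build F U V *:%R f f_lin.

Lemma lin0 : f 0 = 0. Proof. exact: linear0. Qed.
Lemma linD a b : f (a + b) = f a + f b. Proof. exact: linearD. Qed.
Lemma linZ k a : f (k *: a) = k *: f a. Proof. exact: linearZ. Qed.
Lemma linB a b : f (a - b) = f a - f b. Proof. exact: linearB. Qed.
Lemma lin_sum (I : Type) (s : seq I) (P : pred I) (G : I -> U) :
  f (\sum_(i <- s | P i) G i) = \sum_(i <- s | P i) f (G i).
Proof. exact: linear_sum. Qed.

End LinearFun.

Lemma lin_id (F : fieldType) (U : lmodType F) : linear (@id U).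
Proof. by []. Qed.

Lemma lin_comp (F : fieldType) (U V W : lmodType F) (f : V -> W) (g : U -> V) :
  linear f -> linear g -> linear (f \o g).
Proof. by move=> Hf Hg k a b /=; rewrite Hg Hf. Qed.

Lemma iter_lin (F : fieldType) (U : lmodType F) (g : U -> U) n :
  linear g -> linear (iter n g).
Proof. by move=> Hg; elim: n => [|n IH] k a c //=; rewrite IH Hg. Qed.

Lemma bilinear_comp (F : fieldType) (U V U' V' W : lmodType F) (f : U' -> V' -> W)
    (g : U -> U') (h : V -> V') :
  bilinear_map f -> linear g -> linear h -> bilinear_map (fun u v => f (g u) (h v)).
Proof. by case=> fl fr Hg Hh; split=> [v|u] k a b /=; rewrite ?Hg ?Hh ?fl ?fr. Qed.

Lemma linear_bilinear (F : fieldType) (U V W W' : lmodType F) (g : W -> W')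
    (f : U -> V -> W) :
  linear g -> bilinear_map f -> bilinear_map (fun u v => g (f u v)).
Proof. by move=> Hg [fl fr]; split=> [v|u] k a b /=; rewrite ?fl ?fr Hg. Qed.

Lemma bilinear_mul (F : fieldType) (A : algType F) : bilinear_map (@GRing.mul A).
Proof. by split=> [v|u] k a b /=; rewrite ?mulrDl ?mulrDr -?scalerAl -?scalerAr. Qed.

Lemma sum_ord_widen0 (V : nmodType) (G : nat -> V) n m : (n <= m)%N ->
  (forall i, (n <= i)%N -> G i = 0) -> \sum_(i < m) G i = \sum_(i < n) G i.
Proof.
move=> nm G0; rewrite [RHS](big_ord_widen m G nm) [RHS]big_mkcond.
by apply: eq_bigr => i _; case: ifP => // /negbT; rewrite -leqNgt => /G0.
Qed.

Section TensorProduct.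
Variables (F : fieldType) (U V X : lmodType F) (tp : U -> V -> X).
Hypothesis Ht : is_tensor tp.

Lemma tp_bil : bilinear_map tp. Proof. by case: Ht. Qed.
Lemma tp_linl v : linear (tp^~ v). Proof. by case: tp_bil. Qed.
Lemma tp_linr u : linear (tp u). Proof. by case: tp_bil. Qed.

Definition tensor_lift (Y : lmodType F) (f : U -> V -> Y) (f_bil : bilinear_map f) : X -> Y :=
  proj1_sig (constructive_indefinite_description _ (proj2 Ht Y f f_bil)).

Lemma tensor_lift_lin Y f f_bil : linear (@tensor_lift Y f f_bil).
Proof. by rewrite /tensor_lift; case: constructive_indefinite_description => h /= []. Qed.

Lemma tensor_liftE Y f f_bil u v : @tensor_lift Y f f_bil (tp u v) = f u v.
Proof. by rewrite /tensor_lift; case: constructive_indefinite_description => h /= []. Qed.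

Lemma tensor_ext (Y : lmodType F) (g g' : X -> Y) : linear g -> linear g' ->
  (forall u v, g (tp u v) = g' (tp u v)) -> forall z, g z = g' z.
Proof.
move=> Hg Hg' Egg' z.
have [h [_ _ uniq_h]] := proj2 Ht Y _ (linear_bilinear Hg tp_bil).
by rewrite (uniq_h g Hg (fun u v => erefl)) (uniq_h g' Hg' (fun u v => esym (Egg' u v))).
Qed.

Definition tensor_spanned z := exists s : seq (U * V), z = \sum_(p <- s) tp p.1 p.2.

Definition tensor_spanb : {pred X} :=
  fun z => if excluded_middle_informative (tensor_spanned z) then true else false.

Lemma tensor_spanbP z : reflect (tensor_spanned z) (z \in tensor_spanb).
Proof. by rewrite unfold_in /tensor_spanb; case: excluded_middle_informative; constructor. Qed.

Lemma tensor_spanb_submod : submod_closed tensor_spanb.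
Proof.
split; first by apply/tensor_spanbP; exists [::]; rewrite big_nil.
move=> k _ _ /tensor_spanbP[s ->] /tensor_spanbP[s' ->]; apply/tensor_spanbP.
exists ([seq (k *: p.1, p.2) | p <- s] ++ s').
rewrite big_cat big_map /= scaler_sumr; congr (_ + _).
by apply: eq_bigr => p _; rewrite (linZ (tp_linl _)).
Qed.

HB.instance Definition _ := GRing.isSubmodClosed.Build F X tensor_spanb tensor_spanb_submod.

Inductive tensor_span : predArgType := TensorSpan z of z \in tensor_spanb.
Definition tensor_span_val (w : tensor_span) : X := let: TensorSpan z _ := w in z.
HB.instance Definition _ := [isSub for tensor_span_val].
HB.instance Definition _ := [Choice of tensor_span by <:].
HB.instance Definition _ := [SubChoice_isSubZmodule of tensor_span by <:].
HB.instance Definition _ := [SubZmodule_isSubLmodule of tensor_span by <:].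

Lemma tp_spanb u v : tp u v \in tensor_spanb.
Proof. by apply/tensor_spanbP; exists [:: (u, v)]; rewrite big_seq1. Qed.

(* [val \o h] is the identity, where [h] lifts [tp] into the span of the pure tensors. *)
Lemma tensor_spanning z : tensor_spanned z.
Proof.
have tpS_bil : bilinear_map (fun u v => TensorSpan (tp_spanb u v)).
  by split=> [v|u] k a b; apply: val_inj; rewrite /= ?(linD (tp_linl _)) ?(linZ (tp_linl _))
    ?(linD (tp_linr _)) ?(linZ (tp_linr _)).
have [h [h_lin hE _]] := proj2 Ht _ _ tpS_bil.
have val_h_lin : linear (val \o h) by move=> k a b /=; rewrite h_lin.
have -> : z = val (h z).
  by apply: (tensor_ext (@lin_id _ X) val_h_lin) => u v /=; rewrite hE.
by case: (h z) => w /= /tensor_spanbP.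
Qed.

End TensorProduct.

Section TensorAlgebra.
Variables (F : fieldType) (T TT : algType F) (tp : T -> T -> TT).
Hypothesis Hta : is_tensor_algebra tp.

Lemma tensor_algebra_tensor : is_tensor tp. Proof. by case: Hta. Qed.
Lemma tpM a b c d : tp a b * tp c d = tp (a * c) (b * d). Proof. by case: Hta. Qed.
Lemma tp11 : tp 1 1 = 1. Proof. by case: Hta. Qed.

End TensorAlgebra.

Section HopfAlgebra.
Variables (F : fieldType) (T TT : algType F) (tp : T -> T -> TT)
  (TTT : lmodType F) (tpL : TT -> T -> TTT) (tpR : T -> TT -> TTT)
  (D : T -> TT) (eps : T -> F) (S : T -> T).
Hypotheses (Hta : is_tensor_algebra tp) (H3 : is_triple_tensor tp tpL tpR)
  (Hh : hopf_algebra tp tpL tpR D eps S).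

Let Ht := tensor_algebra_tensor Hta.
Let HtL : is_tensor tpL. Proof. by case: H3. Qed.
Let HtR : is_tensor tpR. Proof. by case: H3. Qed.
Let tpLR a b c : tpL (tp a b) c = tpR a (tp b c). Proof. by case: H3. Qed.
Let tpM := tpM Hta.

Lemma comul_lin : linear D. Proof. by case: Hh => [[]]. Qed.
Lemma comul1 : D 1 = 1. Proof. by case: Hh => [[_ []]]. Qed.
Lemma comulM a b : D (a * b) = D a * D b. Proof. by case: Hh => [[_ [_ ->]]]. Qed.
Lemma antipode_lin : linear S. Proof. by case: Hh => _ _ _ _ []. Qed.

Lemma comulX a n : D (a ^+ n) = D a ^+ n.
Proof. by elim: n => [|n IH]; rewrite ?expr0 ?comul1 // !exprS comulM IH. Qed.

Definition mulT := tensor_lift Ht (bilinear_mul T).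
Definition antipodeL := tensor_lift Ht (bilinear_comp (tp_bil Ht) antipode_lin (@lin_id _ T)).
Definition antipodeR := tensor_lift Ht (bilinear_comp (tp_bil Ht) (@lin_id _ T) antipode_lin).

Lemma mulT_lin : linear mulT. Proof. exact: tensor_lift_lin. Qed.
Lemma antipodeL_lin : linear antipodeL. Proof. exact: tensor_lift_lin. Qed.
Lemma antipodeR_lin : linear antipodeR. Proof. exact: tensor_lift_lin. Qed.
Lemma mulTE a b : mulT (tp a b) = a * b. Proof. exact: tensor_liftE. Qed.
Lemma antipodeLE a b : antipodeL (tp a b) = tp (S a) b. Proof. exact: tensor_liftE. Qed.
Lemma antipodeRE a b : antipodeR (tp a b) = tp a (S b). Proof. exact: tensor_liftE. Qed.

Lemma counit_bilL : bilinear_map (fun (a b : T) => eps a *: b).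
Proof.
case: Hh => _ [eps_lin _] _ _ _.
split=> [v|u] k a b /=; first by rewrite eps_lin scalerDl scalerA.
by rewrite scalerDr !scalerA mulrC.
Qed.

Lemma counit_bilR : bilinear_map (fun (a b : T) => eps b *: a).
Proof.
case: Hh => _ [eps_lin _] _ _ _.
split=> [v|u] k a b /=; first by rewrite scalerDr !scalerA mulrC.
by rewrite eps_lin scalerDl scalerA.
Qed.

Definition counitL := tensor_lift Ht counit_bilL.
Definition counitR := tensor_lift Ht counit_bilR.

Lemma counit_comul t : counitL (D t) = t /\ counitR (D t) = t.
Proof.
case: Hh => _ _ _ /(_ counitL counitR) + _; apply=> //;
  (exact: tensor_lift_lin || exact: tensor_liftE).
Qed.

Lemma antipode_comul t :
  mulT (antipodeL (D t)) = eps t *: 1 /\ mulT (antipodeR (D t)) = eps t *: 1.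
Proof.
case: Hh => _ _ _ _ [_ _ /(_ (mulT \o antipodeL) (mulT \o antipodeR))]; apply.
- exact: lin_comp mulT_lin antipodeL_lin.
- exact: lin_comp mulT_lin antipodeR_lin.
- by move=> a b /=; rewrite antipodeLE mulTE.
- by move=> a b /=; rewrite antipodeRE mulTE.
Qed.

(* Every identity below comes from coassociativity, read through a linear map
   [th] out of the triple tensor product. *)
Lemma comul_transfer (Y : lmodType F) (th : TTT -> Y) (g1 g2 : TT -> Y) :
  linear th -> linear g1 -> linear g2 ->
  (forall a b, th (tpL (D a) b) = g1 (tp a b)) ->
  (forall a b, th (tpR a (D b)) = g2 (tp a b)) ->
  forall t, g1 (D t) = g2 (D t).
Proof.
move=> th_lin g1_lin g2_lin thL thR t.
have [h1 [h1_lin h1E _]] := proj2 Ht _ _ (bilinear_comp (tp_bil HtL) comul_lin (@lin_id _ T)).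
have [h2 [h2_lin h2E _]] := proj2 Ht _ _ (bilinear_comp (tp_bil HtR) (@lin_id _ T) comul_lin).
have g1E w : g1 w = (th \o h1) w.
  by apply: (tensor_ext Ht g1_lin (lin_comp th_lin h1_lin)) => a b /=; rewrite h1E.
have g2E w : g2 w = (th \o h2) w.
  by apply: (tensor_ext Ht g2_lin (lin_comp th_lin h2_lin)) => a b /=; rewrite h2E.
case: Hh => _ _ coass _ _.
by rewrite g1E g2E /= (coass h1 h2 h1_lin h2_lin h1E h2E).
Qed.

Lemma tensor_lift_tpR (Y : lmodType F) (f : TT -> T -> Y) (f_bil : bilinear_map f)
    (g : T -> TT -> Y) :
  (forall a, linear (g a)) -> (forall a b c, f (tp a b) c = g a (tp b c)) ->
  forall a w, tensor_lift HtL f_bil (tpR a w) = g a w.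
Proof.
move=> g_lin fg a; apply: (tensor_ext Ht) => [|//|b c].
  exact: lin_comp (tensor_lift_lin _ _) (tp_linr HtR a).
by rewrite -tpLR tensor_liftE.
Qed.

Definition can2 := tensor_lift Ht (bilinear_comp (bilinear_mul TT) (tp_linl Ht 1) comul_lin).
Definition can1 := tensor_lift Ht (bilinear_comp (bilinear_mul TT) comul_lin (tp_linr Ht 1)).
Definition can2_inv := tensor_lift Ht
  (bilinear_comp (bilinear_mul TT) (tp_linl Ht 1) (lin_comp antipodeL_lin comul_lin)).
Definition can1_inv := tensor_lift Ht
  (bilinear_comp (bilinear_mul TT) (lin_comp antipodeR_lin comul_lin) (tp_linr Ht 1)).
Definition mulcomulL := tensor_lift Ht
  (bilinear_comp (tp_bil Ht) (lin_comp mulT_lin comul_lin) (@lin_id _ T)).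
Definition mulcomulR := tensor_lift Ht
  (bilinear_comp (tp_bil Ht) (@lin_id _ T) (lin_comp mulT_lin comul_lin)).

Lemma can2_lin : linear can2. Proof. exact: tensor_lift_lin. Qed.
Lemma can1_lin : linear can1. Proof. exact: tensor_lift_lin. Qed.
Lemma can2_inv_lin : linear can2_inv. Proof. exact: tensor_lift_lin. Qed.
Lemma can1_inv_lin : linear can1_inv. Proof. exact: tensor_lift_lin. Qed.
Lemma mulcomulL_lin : linear mulcomulL. Proof. exact: tensor_lift_lin. Qed.
Lemma mulcomulR_lin : linear mulcomulR. Proof. exact: tensor_lift_lin. Qed.

Lemma can2E u v : can2 (tp u v) = tp u 1 * D v. Proof. exact: tensor_liftE. Qed.
Lemma can1E u v : can1 (tp u v) = D u * tp 1 v. Proof. exact: tensor_liftE. Qed.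
Lemma can2_invE u v : can2_inv (tp u v) = tp u 1 * antipodeL (D v).
Proof. exact: tensor_liftE. Qed.
Lemma can1_invE u v : can1_inv (tp u v) = antipodeR (D u) * tp 1 v.
Proof. exact: tensor_liftE. Qed.
Lemma mulcomulLE u v : mulcomulL (tp u v) = tp (mulT (D u)) v. Proof. exact: tensor_liftE. Qed.
Lemma mulcomulRE u v : mulcomulR (tp u v) = tp u (mulT (D v)). Proof. exact: tensor_liftE. Qed.

Lemma can2_comul t : can2 (D t) = mulcomulL (D t).
Proof.
pose th := tensor_lift HtL (bilinear_comp (tp_bil Ht) mulT_lin (@lin_id _ T)).
have thR : forall a w, th (tpR a w) = tp a 1 * w.
  apply: tensor_lift_tpR => [a k p q | a b c /=]; first by rewrite mulrDr scalerAr.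
  by rewrite mulTE tpM mul1r.
symmetry; apply: (comul_transfer (th := th) (tensor_lift_lin _ _) mulcomulL_lin can2_lin).
  by move=> a b; rewrite /th tensor_liftE mulcomulLE.
by move=> a b; rewrite thR can2E.
Qed.

Lemma can1_comul t : can1 (D t) = mulcomulR (D t).
Proof.
pose th := tensor_lift HtL (bilinear_comp (bilinear_mul TT) (@lin_id _ TT) (tp_linr Ht 1)).
have thR : forall a w, th (tpR a w) = tp a (mulT w).
  apply: tensor_lift_tpR => [a | a b c /=]; first exact: lin_comp (tp_linr Ht a) mulT_lin.
  by rewrite mulTE tpM mulr1.
apply: (comul_transfer (th := th) (tensor_lift_lin _ _) can1_lin mulcomulR_lin).
  by move=> a b; rewrite /th tensor_liftE can1E.
by move=> a b; rewrite thR mulcomulRE.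
Qed.

Lemma can2_inv_comul t : can2_inv (D t) = tp 1 t.
Proof.
pose th := tensor_lift HtL
  (bilinear_comp (tp_bil Ht) (lin_comp mulT_lin antipodeR_lin) (@lin_id _ T)).
have thR : forall a w, th (tpR a w) = tp a 1 * antipodeL w.
  apply: tensor_lift_tpR => [a k p q | a b c /=].
    by rewrite antipodeL_lin mulrDr scalerAr.
  by rewrite antipodeRE mulTE antipodeLE tpM mul1r.
rewrite -{2}((counit_comul t).1) -/((tp 1 \o counitL) (D t)).
symmetry; apply: (comul_transfer (th := th) (tensor_lift_lin _ _) _ can2_inv_lin).
- exact: lin_comp (tp_linr Ht 1) (tensor_lift_lin _ _).
- move=> a b; rewrite /th tensor_liftE /= (antipode_comul _).2 /counitL tensor_liftE.
  by rewrite (linZ (tp_linl Ht _)) (linZ (tp_linr Ht _)).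
by move=> a b; rewrite thR can2_invE.
Qed.

Lemma can1_inv_comul t : can1_inv (D t) = tp t 1.
Proof.
pose th := tensor_lift HtL
  (bilinear_comp (bilinear_mul TT) antipodeR_lin (tp_linr Ht 1)).
have thR : forall a w, th (tpR a w) = tp a (mulT (antipodeL w)).
  apply: tensor_lift_tpR => [a | a b c /=].
    exact: lin_comp (tp_linr Ht a) (lin_comp mulT_lin antipodeL_lin).
  by rewrite antipodeRE tpM mulr1 antipodeLE mulTE.
rewrite -{2}((counit_comul t).2) -/(((tp^~ 1) \o counitR) (D t)).
apply: (comul_transfer (th := th) (tensor_lift_lin _ _) can1_inv_lin).
- exact: lin_comp (tp_linl Ht 1) (tensor_lift_lin _ _).
- by move=> a b; rewrite /th tensor_liftE can1_invE.
move=> a b; rewrite thR (antipode_comul _).1 /counitR /= tensor_liftE.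
by rewrite (linZ (tp_linl Ht _)) (linZ (tp_linr Ht _)).
Qed.

Lemma can2_inv_mull u w : can2_inv (tp u 1 * w) = tp u 1 * can2_inv w.
Proof.
move: w; apply: (tensor_ext Ht).
- by move=> k p q; rewrite mulrDr -scalerAr can2_inv_lin.
- by move=> k p q; rewrite can2_inv_lin mulrDr scalerAr.
by move=> a b; rewrite tpM mul1r !can2_invE mulrA tpM mulr1.
Qed.

Lemma can1_inv_mulr w v : can1_inv (w * tp 1 v) = can1_inv w * tp 1 v.
Proof.
move: w; apply: (tensor_ext Ht).
- by move=> k p q; rewrite mulrDl -scalerAl can1_inv_lin.
- by move=> k p q; rewrite can1_inv_lin mulrDl scalerAl.
by move=> a b; rewrite tpM mulr1 !can1_invE -mulrA tpM mulr1.
Qed.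

Lemma can2K w : can2_inv (can2 w) = w.
Proof.
move: w; apply: (tensor_ext Ht) => //; first exact: lin_comp can2_inv_lin can2_lin.
by move=> a b /=; rewrite can2E can2_inv_mull can2_inv_comul tpM mulr1 mul1r.
Qed.

Lemma can1K w : can1_inv (can1 w) = w.
Proof.
move: w; apply: (tensor_ext Ht) => //; first exact: lin_comp can1_inv_lin can1_lin.
by move=> a b /=; rewrite can1E can1_inv_mulr can1_inv_comul tpM mulr1 mul1r.
Qed.

Lemma can2_mulr w y : can2 (w * tp 1 y) = can2 w * D y.
Proof.
move: w; apply: (tensor_ext Ht).
- by move=> k p q; rewrite mulrDl -scalerAl can2_lin.
- by move=> k p q; rewrite can2_lin mulrDl scalerAl.
by move=> a b; rewrite tpM mulr1 !can2E comulM mulrA.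
Qed.

Lemma can1_mull y w : can1 (tp y 1 * w) = D y * can1 w.
Proof.
move: w; apply: (tensor_ext Ht).
- by move=> k p q; rewrite mulrDr -scalerAr can1_lin.
- by move=> k p q; rewrite can1_lin mulrDr scalerAr.
by move=> a b; rewrite tpM mul1r !can1E comulM mulrA.
Qed.

End HopfAlgebra.

Section SkewPoly.
Variables (F : fieldType) (T : algType F) (R : {pred T}) (sg dl : T -> T) (x : T).
Hypotheses (HR : subalg_closed R) (Hsg : alg_automorphism_on R sg)
  (Hdl : sigma_derivation_on R sg dl) (Hsk : is_skew_poly R sg dl x).
HB.instance Definition _ := GRing.isSubalgClosed.Build F T R (GRing.subalg_closed_semi HR).

Definition xexpansion (t : T) (s : seq T) : bool :=
  all (fun c => c \in R) s && (t == \sum_(i < size s) s`_i * x ^+ i).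

Lemma xexpansion_exists t : exists s, xexpansion t s.
Proof.
have [_ + _] := Hsk; case/(_ t) => n [c [cR ->]].
exists [seq c i | i : 'I_n]; apply/andP; split.
  by apply/allP => _ /mapP[i _ ->].
rewrite size_map size_enum_ord; apply/eqP/eq_bigr => i _.
by rewrite (nth_map i) ?size_enum_ord // nth_ord_enum.
Qed.

Definition xcoefs t := xchoose (xexpansion_exists t).
Definition xcoef i t := (xcoefs t)`_i.

Lemma xcoefR i t : xcoef i t \in R.
Proof.
have /andP[/allP sR _] := xchooseP (xexpansion_exists t).
rewrite /xcoef; case: (ltnP i (size (xcoefs t))) => [/(mem_nth 0)/sR //|ge].
by rewrite nth_default ?rpred0.
Qed.

Lemma xcoef_size t i : (size (xcoefs t) <= i)%N -> xcoef i t = 0.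
Proof. exact: nth_default. Qed.

Lemma xfree n (c : nat -> T) : (forall i, c i \in R) ->
  \sum_(i < n) c i * x ^+ i = 0 -> forall i, (i < n)%N -> c i = 0.
Proof.
case: Hsk => _ _ free cR c0 i lt_in.
exact: (free n (fun j : 'I_n => c j) (fun j => cR j) c0 (Ordinal lt_in)).
Qed.

Lemma xexpand_size t : t = \sum_(i < size (xcoefs t)) xcoef i t * x ^+ i.
Proof. by have /andP[_ /eqP] := xchooseP (xexpansion_exists t). Qed.

Lemma xexpand t n : (forall i, (n <= i)%N -> xcoef i t = 0) ->
  t = \sum_(i < n) xcoef i t * x ^+ i.
Proof.
move=> t0; set N := maxn n (size (xcoefs t)).
rewrite -(@sum_ord_widen0 _ (fun i => xcoef i t * x ^+ i) _ N (leq_maxl _ _)); last first.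
  by move=> i /t0 ->; rewrite mul0r.
rewrite (@sum_ord_widen0 _ (fun i => xcoef i t * x ^+ i) _ N (leq_maxr _ _)) -?xexpand_size //.
by move=> i /xcoef_size ->; rewrite mul0r.
Qed.

Lemma xcoef_sum n (c : nat -> T) : (forall j, c j \in R) ->
  forall i, xcoef i (\sum_(j < n) c j * x ^+ j) = if (i < n)%N then c i else 0.
Proof.
move=> cR i; set t := \sum_(j < n) _; set N := maxn n (size (xcoefs t)).
pose e j := if (j < n)%N then c j else 0.
have eR j : e j \in R by rewrite /e; case: ifP; rewrite ?rpred0.
have ex0 : \sum_(j < N) (xcoef j t - e j) * x ^+ j = 0.
  under eq_bigr do rewrite mulrBl; rewrite sumrB.
  rewrite (@sum_ord_widen0 _ (fun j => xcoef j t * x ^+ j) _ N (leq_maxr _ _)); last first.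
    by move=> j /xcoef_size ->; rewrite mul0r.
  rewrite -xexpand_size.
  rewrite (@sum_ord_widen0 _ (fun j => e j * x ^+ j) _ _ (leq_maxl _ _)); last first.
    by move=> j; rewrite /e leqNgt => /negbTE ->; rewrite mul0r.
  by apply/eqP; rewrite subr_eq0 /e; apply/eqP/eq_bigr => j _; rewrite ltn_ord.
case: (ltnP i N) => [lt_iN | le_Ni].
  have eR' j : xcoef j t - e j \in R by rewrite rpredB ?xcoefR.
  by move/eqP: (xfree eR' ex0 lt_iN); rewrite subr_eq0 => /eqP.
have le_si : (size (xcoefs t) <= i)%N := leq_trans (leq_maxr _ _) le_Ni.
have le_ni : (n <= i)%N := leq_trans (leq_maxl _ _) le_Ni.
by rewrite xcoef_size // ltnNge le_ni.
Qed.

Lemma xcoef_lin i : linear (xcoef i).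
Proof.
move=> k t t'; set N := maxn (size (xcoefs t)) (size (xcoefs t')).
have t0 j : (N <= j)%N -> xcoef j t = 0.
  by move=> le_Nj; rewrite xcoef_size // (leq_trans (leq_maxl _ _) le_Nj).
have t'0 j : (N <= j)%N -> xcoef j t' = 0.
  by move=> le_Nj; rewrite xcoef_size // (leq_trans (leq_maxr _ _) le_Nj).
rewrite {1}(xexpand t0) {1}(xexpand t'0) scaler_sumr -big_split /=.
under eq_bigr do rewrite scalerAl -mulrDl.
rewrite (@xcoef_sum _ (fun j => k *: xcoef j t + xcoef j t')) => [|j]; last first.
  by rewrite rpredD ?rpredZ ?xcoefR.
by case: ltnP => // /[dup] /t0 -> /t'0 ->; rewrite scaler0 addr0.
Qed.

Lemma xcoef_Rmul i r t : r \in R -> xcoef i (r * t) = r * xcoef i t.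
Proof.
move=> rR; rewrite {1}(xexpand_size t) mulr_sumr.
under eq_bigr do rewrite mulrA.
rewrite (@xcoef_sum _ (fun j => r * xcoef j t)) => [|j]; last by rewrite rpredM ?xcoefR.
by case: ltnP => // /xcoef_size ->; rewrite mulr0.
Qed.

Lemma xcoef_monomial i j r : r \in R -> xcoef i (r * x ^+ j) = if i == j then r else 0.
Proof.
move=> rR; have -> : r * x ^+ j = \sum_(k < j.+1) (if (k == j :> nat) then r else 0) * x ^+ k.
  by rewrite big_ord_recr /= eqxx big1 ?add0r // => k _; rewrite ltn_eqF ?mul0r.
rewrite (@xcoef_sum _ (fun k => if k == j then r else 0)) => [|k]; last first.
  by case: ifP; rewrite ?rpred0.
by case: ltnP => //; case: eqP => // -> ; rewrite ltnn.
Qed.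

Lemma xcoef_const i r : r \in R -> xcoef i r = if i == 0%N then r else 0.
Proof. by move=> rR; rewrite -(xcoef_monomial i 0 rR) expr0 mulr1. Qed.

Definition xdeg_le t n := forall i, (n < i)%N -> xcoef i t = 0.

Lemma xdeg_le_expand t n : xdeg_le t n -> t = \sum_(i < n.+1) xcoef i t * x ^+ i.
Proof. by move=> tn; apply: xexpand. Qed.

Lemma xdeg_le_trans t m n : xdeg_le t m -> (m <= n)%N -> xdeg_le t n.
Proof. by move=> tm le_mn i lt_ni; apply: tm; exact: leq_ltn_trans le_mn lt_ni. Qed.

Lemma xdeg_le_Rmul r t n : r \in R -> xdeg_le t n -> xdeg_le (r * t) n.
Proof. by move=> rR tn i lt_ni; rewrite xcoef_Rmul // tn // mulr0. Qed.

Lemma xdeg_le_sum (I : Type) (s : seq I) (P : pred I) (G : I -> T) n :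
  (forall j, P j -> xdeg_le (G j) n) -> xdeg_le (\sum_(j <- s | P j) G j) n.
Proof. by move=> Gn i lt_ni; rewrite (lin_sum (xcoef_lin i)) big1 // => j /Gn->. Qed.

Lemma sgR r : r \in R -> sg r \in R. Proof. by case: Hsg => + _ _ _ _; apply. Qed.
Lemma dlR r : r \in R -> dl r \in R. Proof. by case: Hdl => + _ _; apply. Qed.

Lemma mulx_Rcomm r : r \in R -> x * r = sg r * x + dl r.
Proof. by case: Hsk => + _ _ rR; move/(_ r rR) <-; rewrite addrC subrK. Qed.

Lemma xdeg_le_mulx t n : xdeg_le t n ->
  xdeg_le (x * t) n.+1 /\ xcoef n.+1 (x * t) = sg (xcoef n t).
Proof.
move=> tn.
pose d i := (if i is j.+1 then sg (xcoef j t) else 0) +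
            (if (i < n.+1)%N then dl (xcoef i t) else 0).
have dR i : d i \in R.
  rewrite rpredD //; first by case: i => [|j]; rewrite ?rpred0 ?sgR ?xcoefR.
  by case: ifP; rewrite ?rpred0 ?dlR ?xcoefR.
have -> : x * t = \sum_(i < n.+2) d i * x ^+ i.
  under eq_bigr do rewrite mulrDl.
  rewrite big_split /= [X in X + _]big_ord_recl [X in _ + X]big_ord_recr /=.
  rewrite mul0r add0r ltnn mul0r addr0 -big_split /= {1}(xdeg_le_expand tn) mulr_sumr.
  apply: eq_bigr => i _; rewrite /bump /= add0n add1n ltn_ord.
  by rewrite mulrA mulx_Rcomm ?xcoefR // mulrDl exprS !mulrA.
split; last by rewrite (@xcoef_sum _ d) // ltnSn /d ltnn addr0.
by move=> i lt_ni; rewrite (@xcoef_sum _ d) // ifF //; apply/negbTE; rewrite -leqNgt.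
Qed.

Lemma xdeg_le_mulXn t n i : xdeg_le t n ->
  xdeg_le (x ^+ i * t) (i + n) /\ xcoef (i + n) (x ^+ i * t) = iter i sg (xcoef n t).
Proof.
move=> tn; elim: i => [|i [IH1 IH2]]; first by rewrite expr0 mul1r.
rewrite exprS -mulrA addSn; have [le_x ->] := xdeg_le_mulx IH1; by rewrite IH2.
Qed.

Lemma xdeg_le_mul t t' m n : xdeg_le t m -> xdeg_le t' n ->
  xdeg_le (t * t') (m + n) /\
  xcoef (m + n) (t * t') = xcoef m t * iter m sg (xcoef n t').
Proof.
move=> tm t'n; have Et := xdeg_le_expand tm.
have term_le (i : 'I_m.+1) : xdeg_le (xcoef i t * x ^+ i * t') (m + n).
  rewrite -mulrA; apply: xdeg_le_Rmul; first exact: xcoefR.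
  by apply: (xdeg_le_trans (xdeg_le_mulXn i t'n).1); rewrite leq_add2r -ltnS.
split; first by rewrite Et mulr_suml; apply: xdeg_le_sum => i _.
rewrite [in LHS]Et mulr_suml (lin_sum (xcoef_lin _)) big_ord_recr /= big1 ?add0r.
  by rewrite -mulrA xcoef_Rmul ?xcoefR // (xdeg_le_mulXn m t'n).2.
move=> i _; rewrite -mulrA xcoef_Rmul ?xcoefR // (xdeg_le_mulXn i t'n).1 ?mulr0 //.
by rewrite ltn_add2r.
Qed.

Lemma sg_lin k a c : a \in R -> c \in R -> sg (k *: a + c) = k *: sg a + sg c.
Proof. by case: Hsg => _ _ _ + _; apply. Qed.

Lemma sg_inj a c : a \in R -> c \in R -> sg a = sg c -> a = c.
Proof. by case: Hsg => _ + _ _ _; apply. Qed.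

(* [sg] is only given on [R]; [sgT] extends it linearly to [T] through the constant
   coefficient, so that it can act on a whole tensor factor. *)
Definition sgT t := sg (xcoef 0 t).

Lemma sgT_inv_exists t : exists a, (a \in R) && (sg a == xcoef 0 t).
Proof.
by case: Hsg => _ _ + _ _ => /(_ _ (xcoefR 0 t))[a aR <-]; exists a; rewrite aR eqxx.
Qed.

Definition sgT_inv t := xchoose (sgT_inv_exists t).

Lemma sgT_invR t : sgT_inv t \in R.
Proof. by case/andP: (xchooseP (sgT_inv_exists t)). Qed.

Lemma sg_sgT_inv t : sg (sgT_inv t) = xcoef 0 t.
Proof. by case/andP: (xchooseP (sgT_inv_exists t)) => _ /eqP. Qed.

Lemma sgT_lin : linear sgT.
Proof. by move=> k a c; rewrite /sgT (xcoef_lin 0) sg_lin ?xcoefR. Qed.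

Lemma sgT_inv_lin : linear sgT_inv.
Proof.
move=> k a c; apply: sg_inj; rewrite ?rpredD ?rpredZ ?sgT_invR //.
by rewrite sg_lin ?sgT_invR // !sg_sgT_inv (xcoef_lin 0).
Qed.

Lemma sgT_R r : r \in R -> sgT r = sg r.
Proof. by move=> rR; rewrite /sgT xcoef_const. Qed.

Lemma iter_sgT_R n r : r \in R -> iter n sgT r \in R.
Proof. by move=> rR; case: n => //= n; rewrite sgR ?xcoefR. Qed.

Lemma iter_sgT_inv_R n r : r \in R -> iter n sgT_inv r \in R.
Proof. by move=> rR; case: n => //= n; rewrite sgT_invR. Qed.

Lemma iter_sgT n r : r \in R -> iter n sgT r = iter n sg r.
Proof.
move=> rR; elim: n => //= n ->; rewrite sgT_R //.
by elim: n => //= n IH; rewrite sgR.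
Qed.

Lemma sgTK r : r \in R -> sgT_inv (sgT r) = r.
Proof.
move=> rR; apply: sg_inj; rewrite ?sgT_invR // sg_sgT_inv.
by rewrite /sgT xcoef_const ?sgR ?xcoefR //= xcoef_const.
Qed.

Lemma sgT_invK r : r \in R -> sgT (sgT_inv r) = r.
Proof. by move=> rR; rewrite sgT_R ?sgT_invR // sg_sgT_inv xcoef_const. Qed.

Lemma iter_sgTK n r : r \in R -> iter n sgT_inv (iter n sgT r) = r.
Proof.
elim: n r => [|n IH] r rR //.
by rewrite iterSr iterS sgTK ?iter_sgT_R // IH.
Qed.

Lemma iter_sgT_invK n r : r \in R -> iter n sgT (iter n sgT_inv r) = r.
Proof.
elim: n r => [|n IH] r rR //.
by rewrite iterSr iterS sgT_invK ?iter_sgT_inv_R // IH.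
Qed.

Section GradedTensor.
Variables (TT : algType F) (tp : T -> T -> TT).
Hypothesis Hta : is_tensor_algebra tp.

Let Ht := tensor_algebra_tensor Hta.
Let tpM := tpM Hta.
Let tp11 := tp11 Hta.

Definition otp (b : bool) (u v : T) : TT := if b then tp u v else tp v u.

Lemma otpM b u v u' v' : otp b u v * otp b u' v' = otp b (u * u') (v * v').
Proof. by case: b; rewrite /otp tpM. Qed.
Lemma otp_swap b u v : otp (~~ b) v u = otp b u v. Proof. by case: b. Qed.
Lemma otp_linr b u : linear (otp b u).
Proof. by case: b; [exact: tp_linr | exact: tp_linl]. Qed.
Lemma otp11 b : otp b 1 1 = 1. Proof. by case: b; rewrite /otp tp11. Qed.
Lemma otp0r b u : otp b u 0 = 0. Proof. exact: lin0 (otp_linr b u). Qed.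

Lemma otp_span b z : exists s : seq (T * T), z = \sum_(p <- s) otp b p.1 p.2.
Proof.
have [s ->] := tensor_spanning Ht z; case: b; first by exists s.
by exists [seq (p.2, p.1) | p <- s]; rewrite big_map.
Qed.

Definition on_factor b g (g_lin : linear g) : TT -> TT :=
  if b then tensor_lift Ht (bilinear_comp (tp_bil Ht) (@lin_id _ T) g_lin)
  else tensor_lift Ht (bilinear_comp (tp_bil Ht) g_lin (@lin_id _ T)).

Lemma on_factor_lin b g (g_lin : linear g) : linear (on_factor b g_lin).
Proof. by case: b; exact: tensor_lift_lin. Qed.

Lemma on_factorE b g (g_lin : linear g) u v :
  on_factor b g_lin (otp b u v) = otp b u (g v).
Proof. by case: b; rewrite /on_factor /otp tensor_liftE. Qed.

Lemma on_factor_swap b g (g_lin : linear g) u v :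
  on_factor (~~ b) g_lin (otp b u v) = otp b (g u) v.
Proof. by rewrite -otp_swap on_factorE otp_swap. Qed.

Lemma on_factor_sum b g (g_lin : linear g) (I : Type) (s : seq I) (f h : I -> T) :
  on_factor b g_lin (\sum_(p <- s) otp b (f p) (h p)) = \sum_(p <- s) otp b (f p) (g (h p)).
Proof.
by rewrite (lin_sum (on_factor_lin b g_lin)); apply: eq_bigr => p _; rewrite on_factorE.
Qed.

Definition gcoef b m := on_factor b (xcoef_lin m).
Arguments gcoef : simpl never.

Lemma gcoef_lin b m : linear (gcoef b m). Proof. exact: on_factor_lin. Qed.

Lemma gcoef2E m u v : gcoef true m (tp u v) = tp u (xcoef m v).
Proof. exact: (on_factorE true _ u v). Qed.

Lemma gcoef1E m u v : gcoef false m (tp u v) = tp (xcoef m u) v.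
Proof. exact: (on_factorE false _ v u). Qed.

Lemma gcoef_eventually0 b z : exists n, forall m, (n <= m)%N -> gcoef b m z = 0.
Proof.
have [s ->] := otp_span b z; exists (\sum_(p <- s) size (xcoefs p.2)) => m le_nm.
rewrite /gcoef on_factor_sum big_seq big1 // => p p_s.
rewrite xcoef_size ?otp0r // (leq_trans _ le_nm) //.
by rewrite (big_rem p p_s) leq_addr.
Qed.

Lemma gexpand b z n : (forall m, (n <= m)%N -> gcoef b m z = 0) ->
  z = \sum_(i < n) gcoef b i z * otp b 1 (x ^+ i).
Proof.
move=> z0; have [s Ez] := otp_span b z.
set N := maxn n (\sum_(p <- s) size (xcoefs p.2)).
have Ez_N : z = \sum_(i < N) gcoef b i z * otp b 1 (x ^+ i).
  transitivity (\sum_(p <- s) \sum_(i < N) otp b p.1 (xcoef i p.2) * otp b 1 (x ^+ i)).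
    rewrite {1}Ez big_seq [RHS]big_seq; apply: eq_bigr => p p_s.
    under eq_bigr do rewrite otpM mulr1.
    rewrite -(lin_sum (otp_linr b p.1)) -xexpand // => i le_Ni.
    rewrite xcoef_size // (leq_trans _ le_Ni) // (leq_trans _ (leq_maxr _ _)) //.
    by rewrite (big_rem p p_s) leq_addr.
  rewrite exchange_big; apply: eq_bigr => i _.
  by rewrite Ez /gcoef on_factor_sum mulr_suml.
rewrite {1}Ez_N (@sum_ord_widen0 _ (fun i => gcoef b i z * otp b 1 (x ^+ i)) n N) //.
  exact: leq_maxl.
move=> i /z0 ->.
by rewrite mul0r.
Qed.

Definition gdeg_le b z n := forall m, (n < m)%N -> gcoef b m z = 0.

Lemma gdeg_le_expand b z n : gdeg_le b z n ->
  z = \sum_(i < n.+1) gcoef b i z * otp b 1 (x ^+ i).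
Proof. by move=> zn; apply: gexpand. Qed.

Lemma gdeg_le_trans b z m n : gdeg_le b z m -> (m <= n)%N -> gdeg_le b z n.
Proof. by move=> zm le_mn k lt_nk; apply: zm; exact: leq_ltn_trans le_mn lt_nk. Qed.

Lemma gdeg_le_sum b (I : Type) (s : seq I) (P : pred I) (G : I -> TT) n :
  (forall i, P i -> gdeg_le b (G i) n) -> gdeg_le b (\sum_(i <- s | P i) G i) n.
Proof. by move=> Gn m lt_nm; rewrite (lin_sum (gcoef_lin b m)) big1 // => i /Gn->. Qed.

Lemma gdeg_le_span b z n : gdeg_le b z n -> exists s : seq (T * T),
  (forall p, p \in s -> xdeg_le p.2 n) /\ z = \sum_(p <- s) otp b p.1 p.2.
Proof.
move=> zn; have Ez := gdeg_le_expand zn; have [s0 Es0] := otp_span b z.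
exists [seq (p.1, xcoef i p.2 * x ^+ i) | i <- iota 0 n.+1, p <- s0]; split.
  move=> _ /allpairsP[[i p] [i_n _ ->]] j lt_ij /=.
  rewrite xcoef_monomial ?xcoefR // ifF //; apply/negbTE; rewrite neq_ltn.
  by rewrite (leq_trans _ lt_ij) ?orbT // -ltnS; move: i_n; rewrite mem_iota.
rewrite big_allpairs_dep /= {1}Ez -(big_mkord xpredT (fun i => gcoef b i z * otp b 1 (x ^+ i))).
rewrite /index_iota subn0; apply: eq_bigr => i _.
by rewrite {1}Es0 /gcoef on_factor_sum mulr_suml; apply: eq_bigr => p _; rewrite otpM mulr1.
Qed.

Definition twist b n := on_factor b (iter_lin n sgT_lin).
Definition untwist b n := on_factor b (iter_lin n sgT_inv_lin).
Arguments twist : simpl never.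
Arguments untwist : simpl never.

Lemma twist_lin b n : linear (twist b n). Proof. exact: on_factor_lin. Qed.

Definition gconst b w := exists s : seq (T * T),
  (forall p, p \in s -> p.2 \in R) /\ w = \sum_(p <- s) otp b p.1 p.2.

Lemma gconst0 b : gconst b 0.
Proof. by exists [::]; rewrite big_nil. Qed.

Lemma gconstD b w w' : gconst b w -> gconst b w' -> gconst b (w + w').
Proof.
move=> [s [sR ->]] [s' [s'R ->]]; exists (s ++ s'); rewrite big_cat; split => // p.
by rewrite mem_cat => /orP[/sR | /s'R].
Qed.

Lemma gconst_sum b (I : eqType) (s : seq I) (G : I -> TT) :
  (forall i, i \in s -> gconst b (G i)) -> gconst b (\sum_(i <- s) G i).
Proof.
elim: s => [|i s IH] Gc; first by rewrite big_nil; exact: gconst0.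
rewrite big_cons; apply: gconstD; first exact/Gc/mem_head.
by apply: IH => j js; apply: Gc; rewrite inE js orbT.
Qed.

Lemma gconst_otp b u r : r \in R -> gconst b (otp b u r).
Proof. by move=> rR; exists [:: (u, r)]; rewrite big_seq1; split=> // p /[!inE] /eqP->. Qed.

Lemma gconst_gdeg_le0 b w : gconst b w -> gdeg_le b w 0.
Proof.
case=> s [sR ->] m lt0m; rewrite /gcoef on_factor_sum big_seq big1 // => p p_s.
by rewrite xcoef_const ?sR //; case: m lt0m => // m _; rewrite otp0r.
Qed.

Lemma gcoef0_gconst b w : gconst b w -> gcoef b 0 w = w.
Proof.
by move/gconst_gdeg_le0/gdeg_le_expand => {2}->; rewrite big_ord1 expr0 otp11 mulr1.
Qed.

Lemma gcoef_gconst b m z : gconst b (gcoef b m z).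
Proof.
have [s ->] := otp_span b z; rewrite /gcoef on_factor_sum.
exists [seq (p.1, xcoef m p.2) | p <- s]; rewrite big_map.
by split=> // _ /mapP[p _ ->]; exact: xcoefR.
Qed.

Lemma twist_gconst b n w : gconst b w -> gconst b (twist b n w).
Proof.
case=> s [sR ->]; rewrite /twist on_factor_sum.
exists [seq (p.1, iter n sgT p.2) | p <- s]; rewrite big_map; split=> //.
by move=> _ /mapP[p p_s ->]; rewrite iter_sgT_R ?sR.
Qed.

Lemma untwist_gconst b n w : gconst b w -> gconst b (untwist b n w).
Proof.
case=> s [sR ->]; rewrite /untwist on_factor_sum.
exists [seq (p.1, iter n sgT_inv p.2) | p <- s]; rewrite big_map; split=> //.
by move=> _ /mapP[p p_s ->]; rewrite iter_sgT_inv_R ?sR.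
Qed.

Lemma twistK b n w : gconst b w -> untwist b n (twist b n w) = w.
Proof.
case=> s [sR ->]; rewrite /twist /untwist !on_factor_sum big_seq [RHS]big_seq.
by apply: eq_bigr => p p_s; rewrite iter_sgTK ?sR.
Qed.

Lemma untwistK b n w : gconst b w -> twist b n (untwist b n w) = w.
Proof.
case=> s [sR ->]; rewrite /twist /untwist !on_factor_sum big_seq [RHS]big_seq.
by apply: eq_bigr => p p_s; rewrite iter_sgT_invK ?sR.
Qed.

Lemma twist_eq0 b n w : gconst b w -> (twist b n w == 0) = (w == 0).
Proof.
move=> wc; apply/eqP/eqP => [tw0 | ->]; last exact: lin0 (twist_lin b n).
by rewrite -(twistK n wc) tw0; exact: lin0 (on_factor_lin _ _).
Qed.

Lemma twist0 b w : gconst b w -> twist b 0 w = w.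
Proof. by case=> s [_ ->]; rewrite /twist on_factor_sum. Qed.

Lemma in_tensor_on_factor b g (g_lin : linear g) w :
  (forall r, r \in R -> g r \in R) -> in_tensor tp R w -> in_tensor tp R (on_factor b g_lin w).
Proof.
move=> gR [s [/allP sR ->]]; rewrite (lin_sum (on_factor_lin b g_lin)).
exists [seq (if b then p.1 else g p.1, if b then g p.2 else p.2) | p <- s].
split; first by apply/allP => _ /mapP[p /sR /andP[p1R p2R] ->]; case: b; rewrite /= ?p1R ?p2R gR.
by rewrite big_map; apply: eq_bigr => p _; case: b; rewrite /on_factor tensor_liftE.
Qed.

Lemma gcoef_in_tensor b m w : gconst b w -> in_tensor tp R (gcoef (~~ b) m w).
Proof.
case=> s [sR ->]; rewrite (lin_sum (gcoef_lin _ m)).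
exists [seq if b then (xcoef m p.1, p.2) else (p.2, xcoef m p.1) | p <- s].
split; first by apply/allP => _ /mapP[p /sR p2R ->]; case: b; rewrite /= xcoefR p2R.
by rewrite big_map; apply: eq_bigr => p _; rewrite /gcoef on_factor_swap; case: b.
Qed.

Lemma twist_in_tensor b n w : in_tensor tp R w -> in_tensor tp R (twist b n w).
Proof. by apply: in_tensor_on_factor => r; apply: iter_sgT_R. Qed.

(* The twist comes from [x ^+ n * r = sg ^ n (r) * x ^+ n + lower terms]. *)
Lemma gdeg_le_mul b p q n m : gdeg_le b p n -> gdeg_le b q m ->
  gdeg_le b (p * q) (n + m) /\
  gcoef b (n + m) (p * q) = gcoef b n p * twist b n (gcoef b m q).
Proof.
move=> /gdeg_le_span[s [sn ->]] /gdeg_le_span[s' [s'm ->]].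
have -> : (\sum_(u <- s) otp b u.1 u.2) * (\sum_(v <- s') otp b v.1 v.2) =
    \sum_(u <- s) \sum_(v <- s') otp b (u.1 * v.1) (u.2 * v.2).
  rewrite mulr_suml; apply: eq_bigr => u _; rewrite mulr_sumr.
  by apply: eq_bigr => v _; rewrite otpM.
split.
  rewrite big_seq; apply: gdeg_le_sum => u u_s; rewrite big_seq.
  apply: gdeg_le_sum => v v_s k lt_k.
  by rewrite /gcoef on_factorE ((xdeg_le_mul (sn u u_s) (s'm v v_s)).1 k lt_k) otp0r.
rewrite (lin_sum (gcoef_lin b _)) /gcoef /twist !on_factor_sum mulr_suml.
apply: eq_big_seq => u u_s; rewrite on_factor_sum mulr_sumr.
apply: eq_big_seq => v v_s; rewrite otpM (xdeg_le_mul (sn u u_s) (s'm v v_s)).2.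
by rewrite iter_sgT ?xcoefR.
Qed.

Lemma gtop_exists b z : z != 0 -> exists n, gdeg_le b z n /\ gcoef b n z != 0.
Proof.
move=> z_neq0; have [N zN] := gcoef_eventually0 b z.
have ex_nz : exists m, gcoef b m z != 0.
  case: (excluded_middle_informative (exists m, gcoef b m z != 0)) => // no_nz.
  have all0 m : gcoef b m z = 0 by apply/eqP; apply: contraT => nz; case: no_nz; exists m.
  by move: z_neq0; rewrite (@gexpand b z 0) ?big_ord0 ?eqxx.
have ub m : gcoef b m z != 0 -> (m <= N)%N.
  by apply: contraR; rewrite -ltnNge => /ltnW /zN ->; rewrite eqxx.
have [n nz n_max] := ex_maxnP ex_nz ub; exists n; split => // m lt_nm.
by apply/eqP; apply: contraT => /n_max; rewrite leqNgt lt_nm.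
Qed.

Lemma gconst_mull b u w : gconst b w -> gconst b (otp b u 1 * w).
Proof.
case=> s [sR ->]; rewrite mulr_sumr.
by apply: gconst_sum => p /sR p2R; rewrite otpM mul1r; exact: gconst_otp.
Qed.

Lemma gconst_mulr b u w : gconst b w -> gconst b (w * otp b u 1).
Proof.
case=> s [sR ->]; rewrite mulr_suml.
by apply: gconst_sum => p /sR p2R; rewrite otpM mulr1; exact: gconst_otp.
Qed.

Lemma in_tensor_gconst b w : in_tensor tp R w -> gconst b w.
Proof.
case=> s [/allP sR ->]; apply: gconst_sum => p /sR /andP[p1R p2R].
by case: b; [exact: gconst_otp | rewrite -[tp _ _]/(otp false _ _); exact: gconst_otp].
Qed.

Lemma gdeg_le_exp b z n j : gdeg_le b z n -> gdeg_le b (z ^+ j) (j * n).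
Proof.
move=> zn; elim: j => [|j IH].
  by rewrite expr0 mul0n -(otp11 b); apply/gconst_gdeg_le0/gconst_otp/rpred1.
by rewrite exprSr mulSn addnC; case: (gdeg_le_mul IH zn).
Qed.

Section TensorDomain.
Hypothesis Hdom : tensor_domain tp R.

(* Compare the top [x]-coefficients in the other tensor factor: they lie in the
   image of [R ⊗ R]. *)
Lemma gconst_mul_neq0 b p q : gconst b p -> gconst b q ->
  p != 0 -> q != 0 -> p * q != 0.
Proof.
move=> pc qc p_neq0 q_neq0.
have [n [pn p_top]] := gtop_exists (~~ b) p_neq0.
have [m [qm q_top]] := gtop_exists (~~ b) q_neq0.
have [_ top_pq] := gdeg_le_mul pn qm.
apply: contraNneq _ (_ : gcoef (~~ b) (n + m) (p * q) != 0).
  by move=> ->; rewrite (lin0 (gcoef_lin _ _)).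
rewrite top_pq; apply/eqP => top0.
have [] := Hdom (gcoef_in_tensor n pc) (twist_in_tensor (~~ b) n (gcoef_in_tensor m qc)) top0.
  by move/eqP; rewrite (negbTE p_top).
by move/eqP; rewrite twist_eq0 ?(negbTE q_top) //; exact: gcoef_gconst.
Qed.

Lemma gtop_exp_neq0 b z n : gdeg_le b z n -> gcoef b n z != 0 ->
  forall j, gcoef b (j * n) (z ^+ j) != 0.
Proof.
move=> zn z_top; elim=> [|j IH].
  have c1 : gconst b (otp b 1 1) by apply: gconst_otp; exact: rpred1.
  by rewrite expr0 mul0n -(otp11 b) gcoef0_gconst // otp11 oner_neq0.
rewrite exprSr mulSn addnC; have [_ ->] := gdeg_le_mul (gdeg_le_exp (j := j) zn) zn.
apply: gconst_mul_neq0 => //; first exact: gcoef_gconst.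
  exact/twist_gconst/gcoef_gconst.
by rewrite twist_eq0 //; exact: gcoef_gconst.
Qed.

Lemma gtop_mul_exp_neq0 b c z n j : gconst b c -> c != 0 ->
  gdeg_le b z n -> gcoef b n z != 0 ->
  gcoef b (j * n) (c * z ^+ j) != 0 /\ gcoef b (j * n) (z ^+ j * c) != 0.
Proof.
move=> cc c_neq0 zn z_top; have zj := gdeg_le_exp (j := j) zn.
have zj_top := gtop_exp_neq0 zn z_top j; have c0 := gconst_gdeg_le0 cc.
split.
  rewrite -[(j * n)%N]add0n; have [_ ->] := gdeg_le_mul c0 zj.
  rewrite gcoef0_gconst // twist0; last exact: gcoef_gconst.
  by apply: (gconst_mul_neq0 cc) => //; exact: gcoef_gconst.
rewrite -[(j * n)%N]addn0; have [_ ->] := gdeg_le_mul zj c0.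
rewrite gcoef0_gconst //; apply: (gconst_mul_neq0 (gcoef_gconst _ _ _)) => //.
  exact: twist_gconst.
by rewrite twist_eq0.
Qed.

Section Comultiplication.
Variables (TTT : lmodType F) (tpL : TT -> T -> TTT) (tpR : T -> TT -> TTT)
  (D : T -> TT) (eps : T -> F) (S : T -> T).
Hypotheses (H3 : is_triple_tensor tp tpL tpR) (Hh : hopf_algebra tp tpL tpR D eps S)
  (Hsub : hopf_subalgebra tp D S R).

Local Notation can1 := (can1 Hta Hh).
Local Notation can2 := (can2 Hta Hh).

Lemma comul_gconst b r : r \in R -> gconst b (D r).
Proof. by case: Hsub => _ + _ _ => /[apply]; exact: in_tensor_gconst. Qed.

Lemma can2_gconst w : gconst true w -> gconst true (can2 w).
Proof.
case=> s [sR ->]; rewrite (lin_sum (can2_lin Hta Hh)).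
by apply: gconst_sum => p /sR p2R; rewrite can2E; apply/gconst_mull/comul_gconst.
Qed.

Lemma can1_gconst w : gconst false w -> gconst false (can1 w).
Proof.
case=> s [sR ->]; rewrite (lin_sum (can1_lin Hta Hh)).
apply: gconst_sum => p /sR p2R; rewrite can1E -[tp 1 _]/(otp false p.1 1).
exact/gconst_mulr/comul_gconst.
Qed.

Lemma gcoef_mulcomulL m w : gcoef true m (mulcomulL Hta Hh w) = mulcomulL Hta Hh (gcoef true m w).
Proof.
move: w; apply: (tensor_ext Ht) => [||u v].
- exact: lin_comp (gcoef_lin _ _) (mulcomulL_lin _ _).
- exact: lin_comp (mulcomulL_lin _ _) (gcoef_lin _ _).
by rewrite mulcomulLE !gcoef2E mulcomulLE.
Qed.

Lemma gcoef_mulcomulR m w : gcoef false m (mulcomulR Hta Hh w) = mulcomulR Hta Hh (gcoef false m w).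
Proof.
move: w; apply: (tensor_ext Ht) => [||u v].
- exact: lin_comp (gcoef_lin _ _) (mulcomulR_lin _ _).
- exact: lin_comp (mulcomulR_lin _ _) (gcoef_lin _ _).
by rewrite mulcomulRE !gcoef1E mulcomulRE.
Qed.

Lemma gtop_ge2 b z m : (1 < m)%N -> gcoef b m z != 0 ->
  exists2 n, (1 < n)%N & gdeg_le b z n /\ gcoef b n z != 0.
Proof.
move=> lt1m zm_neq0.
have z_neq0 : z != 0 by apply: contraNneq zm_neq0 => ->; rewrite (lin0 (gcoef_lin _ _)).
have [n [zn ztop]] := gtop_exists b z_neq0; exists n => //.
by rewrite ltnNge; apply: contra zm_neq0 => le_n1; rewrite zn ?(leq_ltn_trans le_n1).
Qed.

Lemma gcoef_comm i j w : gcoef false i (gcoef true j w) = gcoef true j (gcoef false i w).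
Proof.
move: w; apply: (tensor_ext Ht) => [||u v].
- exact: lin_comp (gcoef_lin _ _) (gcoef_lin _ _).
- exact: lin_comp (gcoef_lin _ _) (gcoef_lin _ _).
by rewrite gcoef2E !gcoef1E gcoef2E.
Qed.

Lemma can1_gdeg_le n d w : gdeg_le false (D x) n -> gdeg_le false w d ->
  gdeg_le false (can1 w) (d * n).
Proof.
move=> xn /gdeg_le_span[s [sd ->]]; rewrite (lin_sum (can1_lin _ _)) big_seq.
apply: gdeg_le_sum => p p_s; rewrite [otp _ _ _]/otp /= (xdeg_le_expand (sd p p_s)).
rewrite (lin_sum (tp_linl Ht _)) (lin_sum (can1_lin _ _)).
apply: gdeg_le_sum => i _; rewrite can1E (comulM Hh) (comulX Hh).
have [cx_le _] := gdeg_le_mul (gconst_gdeg_le0 (comul_gconst false (xcoefR i p.2)))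
  (gdeg_le_exp (j := i) xn).
have [le _] := gdeg_le_mul cx_le (gconst_gdeg_le0 (gconst_otp false p.1 (rpred1 _))).
apply: (gdeg_le_trans le); rewrite add0n addn0 leq_mul2r -ltnS ltn_ord orbT //.
Qed.

Lemma comul_x_gdeg_le2 : gdeg_le true (D x) 1.
Proof.
move=> m lt1m; apply/eqP; apply: contraT => zm_neq0; set z := D x in zm_neq0 *.
have [N lt1N [zN ztop]] := gtop_ge2 lt1m zm_neq0.
have cc j : gconst true (can2 (gcoef true j z)) := can2_gconst (gcoef_gconst _ _ _).
have can2z : can2 z = \sum_(j < N.+1) can2 (gcoef true j z) * z ^+ j.
  rewrite {1}(gdeg_le_expand zN) (lin_sum (can2_lin Hta Hh)); apply: eq_bigr => j _.
  by rewrite can2_mulr (comulX Hh).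
have : gcoef true (N * N) (can2 z) = 0.
  rewrite (can2_comul Hta H3) gcoef_mulcomulL zN ?(lin0 (mulcomulL_lin _ _)) //.
  by rewrite -{1}(muln1 N) ltn_mul2l lt1N andbT (ltnW lt1N).
rewrite can2z (lin_sum (gcoef_lin _ _)) big_ord_recr /= big1 => [|j _].
  rewrite add0r => /eqP; apply: contraLR => _.
  apply: (gtop_mul_exp_neq0 N (cc N) _ zN ztop).1; apply: contraNneq ztop => can0.
  by rewrite -(can2K Hta H3 Hh (gcoef true N z)) can0 (lin0 (can2_inv_lin _ _)).
have [+ _] := gdeg_le_mul (gconst_gdeg_le0 (cc j)) (gdeg_le_exp (j := j) zN).
by apply; rewrite add0n ltn_mul2r ltn_ord (ltnW lt1N).
Qed.

Lemma comul_x_gdeg_le1 : gdeg_le false (D x) 1.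
Proof.
move=> m lt1m; apply/eqP; apply: contraT => zm_neq0; set z := D x in zm_neq0 *.
have [M lt1M [zM ztop]] := gtop_ge2 lt1m zm_neq0.
have lt0M : (0 < M)%N := ltnW lt1M.
set C := gcoef false M z; have Cc : gconst false C := gcoef_gconst _ _ _.
set C' := untwist false M C; have C'c : gconst false C' := untwist_gconst M Cc.
(* [X * C'] has the top term of [z], with the coefficient moved to the right of [X]. *)
set X := tp (x ^+ M) 1.
have XM : gdeg_le false X M /\ gcoef false M X = 1.
  rewrite /X -[x ^+ M]mul1r; split => [k lt_Mk|]; rewrite gcoef1E xcoef_monomial ?rpred1 //.
    by rewrite gtn_eqF // (lin0 (tp_linl Ht _)).
  by rewrite eqxx tp11.
have [XC'M XC'top] := gdeg_le_mul XM.1 (gconst_gdeg_le0 C'c).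
rewrite addn0 XM.2 mul1r gcoef0_gconst // untwistK // in XC'M XC'top.
set z2 := z - X * C'.
have z2M : gdeg_le false z2 M.-1.
  move=> k lt_k; rewrite /z2 (linB (gcoef_lin _ _)).
  have [->|neq_kM] := eqVneq k M; first by rewrite XC'top subrr.
  have lt_Mk : (M < k)%N by rewrite ltn_neqAle eq_sym neq_kM -(prednK lt0M).
  by rewrite zM // XC'M // subrr.
have can1z : can1 z = z ^+ M * can1 C' + can1 z2.
  by rewrite -[z in LHS](subrK (X * C')) addrC (linD (can1_lin _ _)) can1_mull (comulX Hh).
have : gcoef false (M * M) (can1 z) = 0.
  rewrite (can1_comul Hta H3) gcoef_mulcomulR zM ?(lin0 (mulcomulR_lin _ _)) //.
  by rewrite -{1}(muln1 M) ltn_mul2l lt1M lt0M.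
rewrite can1z (linD (gcoef_lin _ _)) (can1_gdeg_le zM z2M) ?addr0; last first.
  by rewrite ltn_mul2r lt0M ltn_predL.
move=> /eqP; apply: contraLR => _.
apply: (gtop_mul_exp_neq0 M (can1_gconst C'c) _ zM ztop).2.
apply: contraNneq ztop => can0; rewrite -/C -(untwistK M Cc) -/C'.
by rewrite -(can1K Hta H3 Hh C') can0 (lin0 (can1_inv_lin _ _)) (lin0 (twist_lin _ _)).
Qed.

Lemma comul_x_decomposition : exists s t v w,
  [/\ in_tensor tp R s, in_tensor tp R t, in_tensor tp R v, in_tensor tp R w &
      D x = s * tp 1 x + t * tp x 1 + v * tp x x + w].
Proof.
pose c i j := gcoef false i (gcoef true j (D x)).
have cR i j : in_tensor tp R (c i j) := gcoef_in_tensor i (gcoef_gconst true j (D x)).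
have Ex := gdeg_le_expand comul_x_gdeg_le2.
have Exj j : gcoef true j (D x) = \sum_(i < 2) c i j * tp (x ^+ i) 1.
  apply: gdeg_le_expand => k lt1k.
  by rewrite gcoef_comm comul_x_gdeg_le1 // (lin0 (gcoef_lin _ _)).
exists (c 0%N 1%N), (c 1%N 0%N), (c 1%N 1%N), (c 0%N 0%N); split => //.
rewrite {1}Ex !big_ord_recr !big_ord0 /= !add0r !Exj !big_ord_recr !big_ord0 /= !add0r.
rewrite !expr0 !expr1 tp11 !mulr1 mulrDl -mulrA tpM mulr1 mul1r.
by rewrite [RHS]addrC -!addrA; congr (_ + _); rewrite addrCA.
Qed.

End Comultiplication.

End TensorDomain.

End GradedTensor.

End SkewPoly.

Theorem lemma2p2p1 (F : fieldType) (T TT : algType F) (tp : T -> T -> TT)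
    (TTT : lmodType F) (tpL : TT -> T -> TTT) (tpR : T -> TT -> TTT)
    (D : T -> TT) (eps : T -> F) (S : T -> T)
    (R : {pred T}) (sg dl : T -> T) (x : T) :
  is_tensor_algebra tp ->
  is_triple_tensor tp tpL tpR ->
  hopf_algebra tp tpL tpR D eps S ->
  hopf_subalgebra tp D S R ->
  alg_automorphism_on R sg ->
  sigma_derivation_on R sg dl ->
  is_skew_poly R sg dl x ->
  tensor_domain tp R ->
  exists s t v w,
    [/\ in_tensor tp R s, in_tensor tp R t, in_tensor tp R v, in_tensor tp R w &
        D x = s * tp 1 x + t * tp x 1 + v * tp x x + w].
Proof.
move=> Hta H3 Hh Hsub Hsg Hdl Hsk Hdom.
have HR : subalg_closed R by case: Hsub.
exact: (comul_x_decomposition HR Hsg Hdl Hsk Hta Hdom H3 Hh Hsub).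
Qed.
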